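(* Let $G$ be a nonabelian group and let $\psi_1,\dots,\psi_t\in\operatorname{End}(G)$ satisfy $\psi_i([G,G])\le Z(G)$ for all $i$ and $[\psi_i(G),\psi_j(G)]\subseteq Z(G)$ for all $1\le i,j\le t$. For $1\le i\le t$ and $\alpha\in\mathscr{E}$ define $g\circ_{\psi_i,\alpha}h=g\,\psi_i(\alpha(g))\,h\,\psi_i(\alpha(g))^{-1}$. Then \[\Big(G,\ \bigcup_{i=1}^t\{\circ_{\psi_i,\alpha}:\alpha\in\mathscr{E}\}\Big)\] is a brace block.
   Context: $Z(G)$ is the center and $[G,G]$ the commutator subgroup; $[\psi_i(G),\psi_j(G)]$ is the subgroup generated by commutators of elements of $\psi_i(G)$ and $\psi_j(G)$. $\mathscr{E}$ denotes the set of formal expressions $\alpha=n_1\phi_1+\cdots+n_s\phi_s$ with $n_k\in\mathbb Z$, $\phi_k\in\operatorname{End}(G)$ (the free group on $\operatorname{End}(G)$, written additively), acting on $G$ by $\alpha(g)=\phi_1(g^{n_1})\cdots\phi_s(g^{n_s})$. A skew left brace is a triple $(B,\cdot,\circ)$ where $(B,\cdot),(B,\circ)$ are groups and $a\circ(b\cdot c)=(a\circ b)\cdot a^{-1}\cdot(a\circ c)$ for all $a,b,c$, with $a^{-1}$ the inverse in $(B,\cdot)$. A brace block is a set $B$ with a collection $\mathscr O$ of binary operations on $B$ such that $(B,\circ,\star)$ is a skew left brace for every $\circ,\star\in\mathscr O$. *)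

From Stdlib Require Import ZArith List.
Import ListNotations.
Set Implicit Arguments.

(* A group structure on a carrier type T (left axioms suffice). *)
Record group (T : Type) := Group {
  gmul : T -> T -> T;
  gone : T;
  ginv : T -> T;
  gmulA : forall x y z, gmul x (gmul y z) = gmul (gmul x y) z;
  gmul1l : forall x, gmul gone x = x;
  gmulVl : forall x, gmul (ginv x) x = gone
}.
Arguments gmul {T} g _ _.
Arguments gone {T} g.
Arguments ginv {T} g _.

Section Defs.
Variables (T : Type) (G : group T).
Local Notation "x * y" := (gmul G x y).

Definition is_endo (f : T -> T) : Prop := forall x y, f (x * y) = f x * f y.

Definition center (x : T) : Prop := forall y, x * y = y * x.

Definition commutator (x y : T) : T := ginv G x * ginv G y * x * y.

Definition subgroup (H : T -> Prop) : Prop :=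
  H (gone G) /\ (forall x y, H x -> H y -> H (x * y)) /\ (forall x, H x -> H (ginv G x)).

Definition generated (S : T -> Prop) (x : T) : Prop :=
  forall H, subgroup H -> (forall y, S y -> H y) -> H x.

Definition commset (A B : T -> Prop) : T -> Prop :=
  generated (fun z => exists x y, A x /\ B y /\ z = commutator x y).

Definition fullset (x : T) : Prop := True.

Definition derived : T -> Prop := commset fullset fullset.

Definition image (f : T -> T) (x : T) : Prop := exists g, x = f g.

Definition gpow (g : T) (n : Z) : T :=
  match n with
  | Z0 => gone G
  | Zpos p => Nat.iter (Pos.to_nat p) (fun x => x * g) (gone G)
  | Zneg p => ginv G (Nat.iter (Pos.to_nat p) (fun x => x * g) (gone G))
  end.

(* formal expressions n_1 phi_1 + ... + n_s phi_s, as words *)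
Definition expr : Type := list (Z * (T -> T)).
Definition expr_valid (a : expr) : Prop := forall p, In p a -> is_endo (snd p).

Definition act (a : expr) (g : T) : T :=
  fold_right (fun p acc => snd p (gpow g (fst p)) * acc) (gone G) a.

Definition circ (psi : T -> T) (a : expr) (g h : T) : T :=
  g * psi (act a g) * h * ginv G (psi (act a g)).

End Defs.

Section Brace.
Variable T : Type.

Definition group_op_with (op : T -> T -> T) (e : T) (inv : T -> T) : Prop :=
  (forall x y z, op x (op y z) = op (op x y) z) /\
  (forall x, op e x = x /\ op x e = x /\ op (inv x) x = e /\ op x (inv x) = e).

Definition is_group_op (op : T -> T -> T) : Prop :=
  exists e inv, group_op_with op e inv.

Definition skew_left_brace (dot o : T -> T -> T) : Prop :=
  exists e inv, group_op_with dot e inv /\ is_group_op o /\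
  forall a b c, o a (dot b c) = dot (dot (o a b) (inv a)) (o a c).

Definition brace_block (O : (T -> T -> T) -> Prop) : Prop :=
  forall o1 o2, O o1 -> O o2 -> skew_left_brace o1 o2.
End Brace.

(* Write λ_g for conjugation by ψ(α(g)). As the images of the ψ_i commute modulo
   Z(G), and inner automorphisms that commute multiply as in an abelian group,
   g ↦ λ_g is a homomorphism from G onto an abelian group of inner automorphisms.
   Such a λ is constant on conjugacy classes, which makes g ∘ h = g λ_g(h) a group
   law with inverse λ_{g^-1}(g^-1); for two such maps λ, μ with commuting images
   the skew brace identity reduces to λ_b μ_a = μ_a λ_b. *)

From Stdlib Require Import ZArith List Setoid Morphisms FunctionalExtensionality.
Set Implicit Arguments.

Section Group.
Variables (T : Type) (G : group T).
Local Notation "x * y" := (gmul G x y).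
Local Notation inv := (ginv G).
Local Notation one := (gone G).

Lemma mulgA x y z : x * (y * z) = x * y * z. Proof. apply gmulA. Qed.
Lemma mul1g x : one * x = x. Proof. apply gmul1l. Qed.
Lemma mulVg x : inv x * x = one. Proof. apply gmulVl. Qed.

Lemma mulKg x y : inv x * (x * y) = y.
Proof. now rewrite mulgA, mulVg, mul1g. Qed.

Lemma mulgI x y z : x * y = x * z -> y = z.
Proof. intros E. now rewrite <- (mulKg x y), E, mulKg. Qed.

Lemma idempotent_one e : e * e = e -> e = one.
Proof.
  intros E. transitivity (inv e * (e * e)).
  - now rewrite mulKg.
  - now rewrite E, mulVg.
Qed.

Lemma mulgV x : x * inv x = one.
Proof. apply idempotent_one. now rewrite <- (mulgA x), mulKg. Qed.

Lemma mulg1 x : x * one = x.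
Proof. now rewrite <- (mulVg x), mulgA, mulgV, mul1g. Qed.

Lemma mulgK x y : y * x * inv x = y.
Proof. now rewrite <- mulgA, mulgV, mulg1. Qed.

Lemma mulgKV x y : y * inv x * x = y.
Proof. now rewrite <- mulgA, mulVg, mulg1. Qed.

Lemma invg_unique x y : x * y = one -> inv x = y.
Proof. intros E. apply (mulgI x). now rewrite mulgV, E. Qed.

Lemma invMg x y : inv (x * y) = inv y * inv x.
Proof. apply invg_unique. now rewrite mulgA, mulgK, mulgV. Qed.

Lemma invg1 : inv one = one.
Proof. apply invg_unique, mul1g. Qed.

Definition conjl (c h : T) : T := c * h * inv c.

Lemma conjl_byM p q h : conjl (p * q) h = conjl p (conjl q h).
Proof. unfold conjl. now rewrite invMg, !mulgA. Qed.

Lemma conjl_by1 h : conjl one h = h.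
Proof. unfold conjl. now rewrite invg1, mul1g, mulg1. Qed.

Lemma conjlM c x y : conjl c (x * y) = conjl c x * conjl c y.
Proof. unfold conjl. now rewrite !mulgA, mulgKV. Qed.

Lemma conjl1 c : conjl c one = one.
Proof. unfold conjl. now rewrite mulg1, mulgV. Qed.

Lemma conjlKV c h : conjl c (conjl (inv c) h) = h.
Proof. now rewrite <- conjl_byM, mulgV, conjl_by1. Qed.

Lemma conjl_central z h : center G z -> conjl z h = h.
Proof. intros Hz. unfold conjl. now rewrite Hz, mulgK. Qed.

(* [c ≡ d]: c and d induce the same inner automorphism, i.e. agree modulo Z(G). *)
Record inner_eq (c d : T) : Prop :=
  InnerEq { conjl_inner : forall h, conjl c h = conjl d h }.
Local Notation "c ≡ d" := (inner_eq c d) (at level 70).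

#[global] Instance inner_eq_equiv : Equivalence inner_eq.
Proof.
  split.
  - now constructor.
  - intros c d [E]. constructor. intros h. now rewrite E.
  - intros c d e [E1] [E2]. constructor. intros h. now rewrite E1, E2.
Qed.

#[global] Instance gmul_inner_proper :
  Proper (inner_eq ==> inner_eq ==> inner_eq) (gmul G).
Proof.
  intros c c' [Ec] d d' [Ed]. constructor. intros h. now rewrite !conjl_byM, Ed, Ec.
Qed.

#[global] Instance ginv_inner_proper : Proper (inner_eq ==> inner_eq) (ginv G).
Proof.
  intros c d [E]. constructor. intros h.
  rewrite <- (conjlKV d h) at 1.
  now rewrite <- E, <- conjl_byM, mulVg, conjl_by1.
Qed.

Lemma central_inner_one z : center G z -> z ≡ one.
Proof. constructor. intros h. now rewrite conjl_by1, conjl_central. Qed.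

Lemma central_commutator_inner_comm x y :
  center G (commutator G x y) -> x * y ≡ y * x.
Proof.
  intros Hz.
  assert (E : y * x * commutator G x y = x * y).
  { unfold commutator. now rewrite !mulgA, mulgK, mulgV, mul1g. }
  now rewrite <- E, (central_inner_one Hz), mulg1.
Qed.

Lemma inner_mulACA a b c d : b * c ≡ c * b -> a * b * (c * d) ≡ a * c * (b * d).
Proof. intros E. now rewrite !mulgA, <- (mulgA a b), E, mulgA. Qed.

Local Notation inner_morph F := (forall x y, F (x * y) ≡ F x * F y).
Local Notation inner_commuting F M := (forall x y, F x * M y ≡ M y * F x).

Definition twisted_mul (F : T -> T) (x y : T) : T := x * conjl (F x) y.
Definition twisted_inv (F : T -> T) (x : T) : T := conjl (F (inv x)) (inv x).

Section TwistedGroup.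
Variable F : T -> T.
Hypothesis F_morph : inner_morph F.
Hypothesis F_comm : inner_commuting F F.

Lemma inner_morph_one : F one ≡ one.
Proof.
  assert (E : F one ≡ F one * F one) by now rewrite <- F_morph, mul1g.
  rewrite <- (mulKg (F one) (F one)) at 1.
  now rewrite <- E, mulVg.
Qed.

Lemma inner_morph_conjl c y : F (conjl c y) ≡ F y.
Proof.
  unfold conjl. rewrite !F_morph, (F_comm c y), <- mulgA, <- (F_morph c).
  now rewrite mulgV, inner_morph_one, mulg1.
Qed.

Lemma inner_morph_twisted_mul x y : F (twisted_mul F x y) ≡ F x * F y.
Proof. unfold twisted_mul. now rewrite F_morph, inner_morph_conjl. Qed.

Lemma twisted_mul_invl a w :
  twisted_mul F (twisted_inv F a) w = conjl (F (inv a)) (inv a * w).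
Proof.
  unfold twisted_mul, twisted_inv.
  now rewrite (conjl_inner (inner_morph_conjl _ _)), conjlM.
Qed.

Lemma twisted_group : group_op_with (twisted_mul F) one (twisted_inv F).
Proof.
  split.
  - intros x y z. unfold twisted_mul.
    rewrite conjlM, mulgA. f_equal.
    rewrite <- conjl_byM. symmetry. apply conjl_inner, inner_morph_twisted_mul.
  - intros x. unfold twisted_mul. repeat split.
    + now rewrite (conjl_inner inner_morph_one), conjl_by1, mul1g.
    + now rewrite conjl1, mulg1.
    + fold (twisted_mul F (twisted_inv F x) x).
      now rewrite twisted_mul_invl, mulVg, conjl1.
    + unfold twisted_inv. rewrite <- conjl_byM, (conjl_inner (symmetry (F_morph _ _))).
      now rewrite mulgV, (conjl_inner inner_morph_one), conjl_by1, mulgV.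
Qed.

End TwistedGroup.

Section TwistedBrace.
Variables F M : T -> T.
Hypothesis F_morph : inner_morph F.
Hypothesis F_comm : inner_commuting F F.
Hypothesis M_morph : inner_morph M.
Hypothesis M_comm : inner_commuting M M.
Hypothesis FM_comm : inner_commuting F M.

Lemma twisted_skew_brace : skew_left_brace (twisted_mul F) (twisted_mul M).
Proof.
  destruct (twisted_group F F_morph F_comm) as [F_assoc F_unit].
  exists one, (twisted_inv F). split; [split; assumption |].
  split; [exists one, (twisted_inv M); exact (twisted_group M M_morph M_comm) |].
  intros a b c.
  rewrite <- F_assoc, (twisted_mul_invl F F_morph F_comm).
  unfold twisted_mul. rewrite mulKg, conjlM, mulgA. f_equal.
  rewrite <- !conjl_byM. apply conjl_inner.
  (* both sides act as μ_a λ_b, since λ_{a μ_a(b)} λ_{a^-1} = λ_b *)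
  rewrite F_morph, (inner_morph_conjl F F_morph F_comm), (F_comm a b).
  rewrite <- (mulgA (F b)), <- (F_morph a), mulgV, (inner_morph_one F F_morph), mulg1.
  symmetry. apply FM_comm.
Qed.

End TwistedBrace.

Fixpoint npow (g : T) (k : nat) : T :=
  match k with O => one | S k => npow g k * g end.

Lemma iter_npow g k : Nat.iter k (fun x => x * g) one = npow g k.
Proof. induction k as [|k IH]; simpl; congruence. Qed.

Lemma npow_inner_comm p q k : p * q ≡ q * p -> p * npow q k ≡ npow q k * p.
Proof.
  intros E. induction k as [|k IH]; simpl.
  - now rewrite mul1g, mulg1.
  - now rewrite mulgA, IH, <- mulgA, E, mulgA.
Qed.

Lemma npowM_inner p q k : p * q ≡ q * p -> npow (p * q) k ≡ npow p k * npow q k.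
Proof.
  intros E. induction k as [|k IH]; simpl.
  - now rewrite mul1g.
  - rewrite IH, inner_mulACA; [reflexivity |].
    symmetry. now apply npow_inner_comm.
Qed.

Lemma gpowM_inner p q n : p * q ≡ q * p -> gpow G (p * q) n ≡ gpow G p n * gpow G q n.
Proof.
  intros E. unfold gpow. destruct n as [|k|k]; rewrite ?iter_npow.
  - now rewrite mul1g.
  - now apply npowM_inner.
  - set (m := Pos.to_nat k).
    assert (Ecomm : npow p m * npow q m ≡ npow q m * npow p m).
    { apply npow_inner_comm. symmetry. apply npow_inner_comm. now symmetry. }
    now rewrite (npowM_inner _ _ m E), Ecomm, invMg.
Qed.

Lemma endo_one f : is_endo G f -> f one = one.
Proof. intros Hf. apply idempotent_one. now rewrite <- Hf, mul1g. Qed.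

Lemma endo_inv f x : is_endo G f -> f (inv x) = inv (f x).
Proof. intros Hf. symmetry. apply invg_unique. now rewrite <- Hf, mulgV, endo_one. Qed.

Lemma endo_gpow f x n : is_endo G f -> f (gpow G x n) = gpow G (f x) n.
Proof.
  intros Hf.
  assert (Hpow : forall k, f (npow x k) = npow (f x) k).
  { induction k as [|k IH]; simpl; [apply endo_one | rewrite Hf, IH]; auto. }
  unfold gpow. destruct n; rewrite ?iter_npow, ?endo_inv, ?Hpow; auto using endo_one.
Qed.

Lemma inner_morph_endo_gpow f n :
  is_endo G f -> inner_commuting f f -> inner_morph (fun g => f (gpow G g n)).
Proof.
  intros Hf Hc x y. cbv beta. now rewrite !endo_gpow, Hf, gpowM_inner by auto.
Qed.

Lemma inner_morph_mul F M :
  inner_morph F -> inner_morph M -> inner_commuting F M ->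
  inner_morph (fun g => F g * M g).
Proof. intros HF HM HFM x y. cbv beta. now rewrite HF, HM, inner_mulACA. Qed.

Lemma inner_morph_act psi (a : expr T) :
  is_endo G psi -> expr_valid G a -> inner_commuting psi psi ->
  inner_morph (fun g => psi (act G a g)).
Proof.
  intros Hpsi Ha Hc. induction a as [|[n phi] a IH].
  - intros x y. simpl. now rewrite endo_one, mul1g.
  - assert (Hphi : is_endo G phi) by (apply (Ha (n, phi)); now left).
    assert (E : forall g, psi (act G ((n, phi) :: a) g)
                          = psi (phi (gpow G g n)) * psi (act G a g))
      by (intros g; apply Hpsi).
    intros x y. rewrite !E.
    apply (inner_morph_mul (fun g => psi (phi (gpow G g n))) (fun g => psi (act G a g))).
    + apply (inner_morph_endo_gpow (f := fun z => psi (phi z))); [| intros ? ?; apply Hc].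
      intros u v. now rewrite Hphi, Hpsi.
    + apply IH. intros p Hp. apply Ha. now right.
    + intros ? ?. apply Hc.
Qed.

Lemma circ_twisted psi (a : expr T) :
  circ G psi a = twisted_mul (fun g => psi (act G a g)).
Proof.
  apply functional_extensionality; intros g.
  apply functional_extensionality; intros h.
  unfold circ, twisted_mul, conjl. now rewrite !mulgA.
Qed.

Lemma generated_gen (S : T -> Prop) x : S x -> generated G S x.
Proof. intros Hx H _ HS. now apply HS. Qed.

Lemma central_commset_inner_commuting f g :
  (forall x, commset G (image f) (image g) x -> center G x) -> inner_commuting f g.
Proof.
  intros Hcentral u v. apply central_commutator_inner_comm, Hcentral, generated_gen.
  exists (f u), (g v). repeat split; eexists; reflexivity.
Qed.

End Group.

Theorem corollary3p4 (T : Type) (G : group T) (t : nat) (psi : nat -> T -> T) :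
  (exists g h, gmul G g h <> gmul G h g) ->
  (forall i, i < t -> is_endo G (psi i)) ->
  (forall i, i < t -> forall x, derived G x -> center G (psi i x)) ->
  (forall i j, i < t -> j < t ->
     forall x, commset G (image (psi i)) (image (psi j)) x -> center G x) ->
  brace_block (fun op : T -> T -> T =>
    exists i (a : expr T), i < t /\ expr_valid G a /\ op = circ G (psi i) a).
Proof.
  intros _ Hendo _ Hcomm o1 o2 [i [a [Hi [Ha ->]]]] [j [b [Hj [Hb ->]]]].
  rewrite !circ_twisted.
  apply twisted_skew_brace; try apply inner_morph_act; auto;
    intros x y;
    apply (central_commset_inner_commuting (f := psi _) (g := psi _)), Hcomm; auto.
Qed.
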